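(* Let $\Theta\in\mathbb{R}^{n\times p}$ be a matrix each of whose rows is monotone (either nondecreasing or nonincreasing). Let $\Theta'=\Theta(I_p-\frac1p ee^\top)$ have singular value decomposition $\Theta'=\sum_{i=1}^r\lambda_i u_iv_i^\top$ with $\lambda_1\ge\cdots\ge\lambda_r>0$, and assume condition (A) holds. Then the leading right singular vector $v_1=(v_{11},\dots,v_{1p})^\top$ satisfies $\sum_{j=1}^p v_{1j}=0$ and $v_{11}\le v_{12}\le\cdots\le v_{1p}$. Moreover, the signs of the components of the leading left singular vector $u_1=(u_{11},\dots,u_{1n})^\top$ indicate the direction of monotonicity of the rows: $u_{1i}\ge 0$ whenever the $i$-th row of $\Theta'$ (equivalently of $\Theta$) is nondecreasing, and $u_{1i}\le0$ whenever it is nonincreasing.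
   Context: $e=(1,\dots,1)^\top\in\mathbb{R}^p$. Condition (A): the largest singular value $\lambda_1$ of $\Theta'$ has multiplicity one, and the first nonzero component of $v_1$ is negative (this fixes the signs of the pair $(u_1,v_1)$). *)

(* Real numbers are modelled by an arbitrary real closed field
   (R : rcfType), which includes the real numbers. *)
From HB Require Import structures.
From mathcomp Require Import all_boot all_order all_algebra.
Set Implicit Arguments. Unset Strict Implicit. Unset Printing Implicit Defensive.
Import Order.TTheory GRing.Theory Num.Theory.
Local Open Scope ring_scope.

Definition row_nondecr (R : realDomainType) (n p : nat) (A : 'M[R]_(n, p)) (i : 'I_n) :=
  forall j1 j2 : 'I_p, (j1 <= j2)%N -> A i j1 <= A i j2.
Definition row_nonincr (R : realDomainType) (n p : nat) (A : 'M[R]_(n, p)) (i : 'I_n) :=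
  forall j1 j2 : 'I_p, (j1 <= j2)%N -> A i j2 <= A i j1.

Definition center (R : fieldType) (n p : nat) (A : 'M[R]_(n, p)) : 'M[R]_(n, p) :=
  A *m (1%:M - p%:R^-1 *: (const_mx 1 : 'M[R]_(p, 1)) *m (const_mx 1 : 'M[R]_(1, p))).

Definition is_svd (R : realFieldType) (n p r : nat) (A : 'M[R]_(n, p))
    (lam : 'I_r -> R) (U : 'M[R]_(n, r)) (V : 'M[R]_(p, r)) : Prop :=
  [/\ U^T *m U = 1%:M,
      V^T *m V = 1%:M,
      (forall i j : 'I_r, (i <= j)%N -> lam j <= lam i),
      (forall i : 'I_r, 0 < lam i)
    & A = \sum_(i < r) lam i *: (col i U *m (col i V)^T)].

(* Condition (A): lam_1 has multiplicity one, and the first nonzero component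
   of v_1 is negative.  Here r = r'.+1 so that lam_1 = lam ord0. *)
Definition condA (R : realFieldType) (p r' : nat) (lam : 'I_r'.+1 -> R)
    (V : 'M[R]_(p, r'.+1)) : Prop :=
  (forall i : 'I_r'.+1, i != ord0 -> lam i < lam ord0) /\
  (exists k : 'I_p, (forall j : 'I_p, (j < k)%N -> V j ord0 = 0) /\ V k ord0 < 0).

From HB Require Import structures.
From mathcomp Require Import all_boot all_order all_algebra.
From mathcomp.algebra_tactics Require Import ring lra.
Import Order.TTheory GRing.Theory Num.Theory.
Local Open Scope ring_scope.

Set Implicit Arguments.
Unset Strict Implicit.
Unset Printing Implicit Defensive.

(* Write C for the centered matrix and (lambda, u, v) for its top singular
   triple.  Multiplying each row of C by a sign s_i = +-1 makes it
   nondecreasing, and it still sums to zero, so by Chebyshev's sum inequality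
   the flipped rows have an entrywise nonnegative Gram matrix.  Hence the unit
   vector y_i = s_i |u_i| satisfies |C^T y| >= |C^T u| = lambda, and as lambda
   is a simple top singular value, C^T y = lambda <u, y> v with <u, y>^2 >= 1.
   Now C^T y is a nonnegative combination of the flipped rows, hence
   nondecreasing; condition (A) excludes <u, y> < 0, so <u, y> = 1, which
   makes v nondecreasing and forces y = u, i.e. sign u_i = s_i. *)

Section SumsOfProducts.
Variable R : comPzRingType.

Lemma sum_mul_delta r (c : 'I_r -> R) (l : 'I_r) :
  \sum_(k < r) c k * (k == l)%:R = c l.
Proof.
by rewrite (bigD1 l) //= eqxx mulr1 big1 ?addr0 // => k /negbTE ->; rewrite mulr0.
Qed.

Lemma orthonormal_colsE m r (V : 'M[R]_(m, r)) : V^T *m V = 1%:M ->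
  forall k l, \sum_(b < m) V b k * V b l = (k == l)%:R.
Proof.
move=> VtV k l; have := congr1 (fun M : 'M_r => M k l) VtV; rewrite !mxE => <-.
by apply: eq_bigr => b _; rewrite mxE.
Qed.

Lemma orthonormal_col_sqr_sum m r (V : 'M[R]_(m, r)) k : V^T *m V = 1%:M ->
  \sum_(b < m) V b k ^+ 2 = 1.
Proof.
move=> /orthonormal_colsE /(_ k k); rewrite eqxx mulr1n => <-.
by apply: eq_bigr => b _; rewrite expr2.
Qed.

Lemma sum_sqr_lincomb m r (c : 'I_r -> R) (f : 'I_r -> 'I_m -> R) :
  \sum_(b < m) (\sum_(k < r) c k * f k b) ^+ 2 =
  \sum_(k < r) \sum_(l < r) c k * c l * \sum_(b < m) f k b * f l b.
Proof.
transitivity (\sum_(b < m) \sum_(k < r) \sum_(l < r) c k * c l * (f k b * f l b)).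
  apply: eq_bigr => b _; rewrite expr2 big_distrl /=; apply: eq_bigr => k _.
  by rewrite big_distrr /=; apply: eq_bigr => l _; ring.
rewrite exchange_big /=; apply: eq_bigr => k _.
by rewrite exchange_big /=; apply: eq_bigr => l _; rewrite big_distrr.
Qed.

Lemma sum_mul_lincomb m r (V : 'M[R]_(m, r)) (c : 'I_r -> R) (y : 'I_m -> R) :
  \sum_(b < m) y b * (\sum_(k < r) c k * V b k) =
  \sum_(k < r) c k * \sum_(b < m) V b k * y b.
Proof.
under eq_bigr do rewrite big_distrr /=.
rewrite exchange_big /=; apply: eq_bigr => k _; rewrite big_distrr /=.
by apply: eq_bigr => b _; ring.
Qed.

Lemma parseval m r (V : 'M[R]_(m, r)) (c : 'I_r -> R) : V^T *m V = 1%:M ->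
  \sum_(b < m) (\sum_(k < r) c k * V b k) ^+ 2 = \sum_(k < r) c k ^+ 2.
Proof.
move=> /orthonormal_colsE VtV; rewrite (sum_sqr_lincomb c (fun k b => V b k)).
apply: eq_bigr => k _; under eq_bigr do rewrite VtV eq_sym.
by rewrite (sum_mul_delta (fun l => c k * c l)) expr2.
Qed.

End SumsOfProducts.

Section Inequalities.
Variable R : realFieldType.

Lemma bessel m r (V : 'M[R]_(m, r)) (y : 'I_m -> R) : V^T *m V = 1%:M ->
  \sum_(k < r) (\sum_(b < m) V b k * y b) ^+ 2 <= \sum_(b < m) y b ^+ 2.
Proof.
move=> VtV; set a := fun k => \sum_(b < m) V b k * y b.
have residual_ge0 : 0 <= \sum_(b < m) (y b - \sum_(k < r) a k * V b k) ^+ 2.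
  by apply: sumr_ge0 => b _; apply: sqr_ge0.
have expand : \sum_(b < m) (y b - \sum_(k < r) a k * V b k) ^+ 2 =
    \sum_(b < m) y b ^+ 2 - 2 * (\sum_(b < m) y b * (\sum_(k < r) a k * V b k))
    + \sum_(b < m) (\sum_(k < r) a k * V b k) ^+ 2.
  by rewrite mulr_sumr -sumrB -big_split /=; apply: eq_bigr => b _; ring.
rewrite expand parseval // sum_mul_lincomb in residual_ge0.
have sum_sqr : \sum_(k < r) a k ^+ 2 = \sum_(k < r) a k * a k.
  by apply: eq_bigr => k _; rewrite expr2.
rewrite sum_sqr in residual_ge0 *; lra.
Qed.

(* Chebyshev's sum inequality, in the form 2p sum_b f_b g_b =
   sum_{b,c} (f_b - f_c)(g_b - g_c) when sum_b g_b = 0. *)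
Lemma chebyshev_sum_ge0 p (f g : 'I_p -> R) :
  (forall j1 j2 : 'I_p, (j1 <= j2)%N -> f j1 <= f j2) ->
  (forall j1 j2 : 'I_p, (j1 <= j2)%N -> g j1 <= g j2) ->
  \sum_(b < p) g b = 0 -> 0 <= \sum_(b < p) f b * g b.
Proof.
case: p f g => [|p] f g f_nd g_nd g_sum0; first by rewrite big_ord0.
have pairs_ge0 : 0 <= \sum_(b < p.+1) \sum_(c < p.+1) (f b - f c) * (g b - g c).
  apply: sumr_ge0 => b _; apply: sumr_ge0 => c _.
  case: (leqP b c) => hbc.
    by rewrite -mulrNN !opprB mulr_ge0 // subr_ge0; [apply: f_nd|apply: g_nd].
  by rewrite mulr_ge0 // subr_ge0; [apply: f_nd|apply: g_nd]; apply: ltnW.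
have expand b c : (f b - f c) * (g b - g c) =
    (f b * g b + f c * g c) - (f b * g c + f c * g b) by ring.
set S := \sum_(b < p.+1) f b * g b.
have diag1 : \sum_(b < p.+1) \sum_(c < p.+1) f b * g b = S *+ p.+1.
  by rewrite -sumrMnl; apply: eq_bigr => b _; rewrite sumr_const card_ord.
have diag2 : \sum_(b < p.+1) \sum_(c < p.+1) f c * g c = S *+ p.+1.
  by rewrite sumr_const card_ord.
have cross1 : \sum_(b < p.+1) \sum_(c < p.+1) f b * g c = 0.
  by rewrite big1 // => b _; rewrite -big_distrr /= g_sum0 mulr0.
have cross2 : \sum_(b < p.+1) \sum_(c < p.+1) f c * g b = 0.
  by under eq_bigr do rewrite -big_distrl /=; rewrite -big_distrr /= g_sum0 mulr0.
move: pairs_ge0; under eq_bigr do under eq_bigr do rewrite expand.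
under eq_bigr do rewrite sumrB !big_split /=.
rewrite sumrB !big_split /= diag1 diag2 cross1 cross2 addr0 subr0.
by rewrite -mulr2n -mulrnA pmulrn_lge0.
Qed.

Lemma sum_sqr_lincomb_le_norm m r (c : 'I_r -> R) (f : 'I_r -> 'I_m -> R) :
  (forall k l, 0 <= \sum_(b < m) f k b * f l b) ->
  \sum_(b < m) (\sum_(k < r) c k * f k b) ^+ 2 <=
  \sum_(b < m) (\sum_(k < r) `|c k| * f k b) ^+ 2.
Proof.
move=> gram_ge0; rewrite !sum_sqr_lincomb.
apply: ler_sum => k _; apply: ler_sum => l _; apply: ler_wpM2r => //.
by rewrite -normrM ler_norm.
Qed.

Lemma nonincr_sum_lt0 p (v : 'I_p -> R) (k : 'I_p) :
  (forall j1 j2 : 'I_p, (j1 <= j2)%N -> v j2 <= v j1) ->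
  (forall j : 'I_p, (j < k)%N -> v j = 0) -> v k < 0 ->
  \sum_(j < p) v j < 0.
Proof.
move=> v_ni v_lt_k vk_lt0; rewrite (bigD1 k) //=.
have : \sum_(j < p | j != k) v j <= 0.
  apply: sumr_le0 => j _; case: (ltnP j k) => hjk; first by rewrite v_lt_k.
  exact: le_trans (v_ni _ _ hjk) (ltW vk_lt0).
lra.
Qed.

Lemma mulr_norm_sqr_ge0 (x : R) : x * `|x| = x ^+ 2 -> 0 <= x.
Proof.
case: (lerP 0 x) => // x_lt0; rewrite ltr0_norm // expr2 mulrN => sq_eq.
have /eqP : x * x = 0 by lra.
by rewrite mulf_eq0 orbb (lt_eqF x_lt0).
Qed.

End Inequalities.

Lemma center_entry (R : fieldType) n p (A : 'M[R]_(n, p)) i j :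
  center A i j = A i j - p%:R^-1 * \sum_(c < p) A i c.
Proof.
rewrite /center !mxE.
under eq_bigr => c _ do rewrite !mxE big_ord1 !mxE mulr1.
rewrite (bigD1 j) //= eqxx mulrBr mulr1.
rewrite (eq_bigr (fun c => A i c * (0 - p%:R^-1))); last first.
  by move=> c /negbTE ->; rewrite mulr1.
by rewrite -big_distrl /= [in RHS](bigD1 j) //=; ring.
Qed.

Section Centering.
Variable R : realFieldType.

Lemma center_row_sum0 n p (A : 'M[R]_(n, p)) i : \sum_(j < p) center A i j = 0.
Proof.
case: p A => [|p] A; first by rewrite big_ord0.
under eq_bigr do rewrite center_entry.
rewrite sumrB sumr_const card_ord -[_ *+ p.+1]mulr_natl mulrA mulfV ?mul1r ?subrr //.
by rewrite pnatr_eq0.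
Qed.

Lemma center_entryB n p (A : 'M[R]_(n, p)) i j1 j2 :
  center A i j1 - center A i j2 = A i j1 - A i j2.
Proof. by rewrite !center_entry; ring. Qed.

Lemma row_nondecr_center n p (A : 'M[R]_(n, p)) i :
  row_nondecr A i -> row_nondecr (center A) i.
Proof.
by move=> A_nd j1 j2 j12; rewrite -subr_ge0 center_entryB subr_ge0 A_nd.
Qed.

Lemma row_nonincr_center n p (A : 'M[R]_(n, p)) i :
  row_nonincr A i -> row_nonincr (center A) i.
Proof.
by move=> A_ni j1 j2 j12; rewrite -subr_ge0 center_entryB subr_ge0 A_ni.
Qed.

Lemma center_const_row n p (A : 'M[R]_(n, p)) i :
  row_nondecr A i -> row_nonincr A i -> forall j, center A i j = 0.
Proof.
move=> A_nd A_ni j.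
have Aij c : A i c = A i j.
  by case: (leqP c j) => [cj|/ltnW jc]; apply/le_anti;
    rewrite ?(A_nd _ _ cj) ?(A_ni _ _ cj) ?(A_nd _ _ jc) ?(A_ni _ _ jc).
have p_gt0 : (0 < p)%N by apply: leq_ltn_trans (ltn_ord j).
rewrite center_entry Aij; under eq_bigr do rewrite Aij.
rewrite sumr_const card_ord -[A i j *+ p]mulr_natl mulrA mulVf ?mul1r ?subrr //.
by rewrite pnatr_eq0 -lt0n.
Qed.

End Centering.

Section SingularVectors.
Variables (R : realFieldType) (n p r : nat) (A : 'M[R]_(n, p)) (lam : 'I_r -> R).
Variables (U : 'M[R]_(n, r)) (V : 'M[R]_(p, r)).
Hypotheses (UtU : U^T *m U = 1%:M) (VtV : V^T *m V = 1%:M).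
Hypothesis A_svd : A = \sum_(k < r) lam k *: (col k U *m (col k V)^T).

Lemma svd_entry i j : A i j = \sum_(k < r) lam k * U i k * V j k.
Proof.
rewrite A_svd summxE; apply: eq_bigr => k _.
by rewrite !mxE big_ord1 !mxE mulrA.
Qed.

Lemma svd_mulr (y : 'I_n -> R) j :
  \sum_(i < n) y i * A i j =
  \sum_(k < r) (lam k * \sum_(i < n) U i k * y i) * V j k.
Proof.
under eq_bigr do rewrite svd_entry big_distrr /=.
rewrite exchange_big /=; apply: eq_bigr => k _.
by rewrite mulr_sumr mulr_suml; apply: eq_bigr => i _; ring.
Qed.

Lemma svd_mull (x : 'I_p -> R) i :
  \sum_(j < p) A i j * x j =
  \sum_(k < r) (lam k * \sum_(j < p) V j k * x j) * U i k.
Proof.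
under eq_bigr do rewrite svd_entry big_distrl /=.
rewrite exchange_big /=; apply: eq_bigr => k _.
by rewrite mulr_sumr mulr_suml; apply: eq_bigr => j _; ring.
Qed.

Lemma svd_mul_right_sv i k : \sum_(j < p) A i j * V j k = lam k * U i k.
Proof.
rewrite svd_mull; under eq_bigr do rewrite (orthonormal_colsE VtV) mulrAC.
exact: sum_mul_delta (fun l => lam l * U i l) k.
Qed.

Lemma svd_mul_left_sv j k : \sum_(i < n) U i k * A i j = lam k * V j k.
Proof.
rewrite svd_mulr; under eq_bigr do rewrite (orthonormal_colsE UtU) mulrAC.
exact: sum_mul_delta (fun l => lam l * V j l) k.
Qed.

Lemma right_sv_sum0 k : (forall i, \sum_(j < p) A i j = 0) -> lam k != 0 ->
  \sum_(j < p) V j k = 0.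
Proof.
move=> row_sum0 lam_neq0.
have /eqP : lam k * \sum_(j < p) V j k = 0.
  rewrite mulr_sumr; under eq_bigr do rewrite -svd_mul_left_sv.
  by rewrite exchange_big big1 // => i _; rewrite -mulr_sumr row_sum0 mulr0.
by rewrite mulf_eq0 (negbTE lam_neq0) => /eqP.
Qed.

End SingularVectors.

Section TopSingularValue.
Variables (R : realFieldType) (n p r' : nat) (A : 'M[R]_(n, p)).
Variables (lam : 'I_r'.+1 -> R) (U : 'M[R]_(n, r'.+1)) (V : 'M[R]_(p, r'.+1)).
Hypotheses (UtU : U^T *m U = 1%:M) (VtV : V^T *m V = 1%:M).
Hypothesis A_svd : A = \sum_(k < r'.+1) lam k *: (col k U *m (col k V)^T).
Hypotheses (lam_gt0 : forall k, 0 < lam k)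
  (lam_top : forall k, k != ord0 -> lam k < lam ord0).

Lemma svd_top_attained (y : 'I_n -> R) :
  \sum_(i < n) y i ^+ 2 <= 1 ->
  lam ord0 ^+ 2 <= \sum_(j < p) (\sum_(i < n) y i * A i j) ^+ 2 ->
  1 <= (\sum_(i < n) U i ord0 * y i) ^+ 2 /\
  forall j, \sum_(i < n) y i * A i j =
            lam ord0 * (\sum_(i < n) U i ord0 * y i) * V j ord0.
Proof.
move=> y_le1 top_le.
set a := fun k => \sum_(i < n) U i k * y i; set l := lam ord0.
have norm_Aty : \sum_(j < p) (\sum_(i < n) y i * A i j) ^+ 2 =
    \sum_(k < r'.+1) (lam k * a k) ^+ 2.
  by under eq_bigr do rewrite (svd_mulr A_svd); apply: parseval.
have a_le1 : \sum_(k < r'.+1) a k ^+ 2 <= 1 := le_trans (bessel y UtU) y_le1.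
have gap_ge0 k : 0 <= (l ^+ 2 - lam k ^+ 2) * a k ^+ 2.
  rewrite mulr_ge0 ?sqr_ge0 // subr_ge0 !expr2.
  have [->|k0] := eqVneq k ord0; first by [].
  by apply: ler_pM; rewrite ?ltW ?lam_top.
have gap_sum0 : \sum_(k < r'.+1) (l ^+ 2 - lam k ^+ 2) * a k ^+ 2 = 0.
  apply/le_anti; rewrite sumr_ge0 // andbT.
  under eq_bigr do rewrite mulrBl.
  rewrite sumrB -mulr_sumr.
  under [X in _ - X]eq_bigr do rewrite -exprMn.
  rewrite -norm_Aty; have := ler_wpM2l (sqr_ge0 l) a_le1.
  rewrite mulr1; move: top_le; rewrite -/l; lra.
have a_eq0 k : k != ord0 -> a k = 0.
  move=> k0; have /eqP := psumr_eq0P (fun k _ => gap_ge0 k) gap_sum0 (i := k) isT.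
  rewrite mulf_eq0 sqrf_eq0 subr_eq0 => /orP [/eqP lam_eq|/eqP //].
  have : lam k ^+ 2 < l ^+ 2 by rewrite !expr2 ltr_pM ?ltW ?lam_top.
  by rewrite lam_eq ltxx.
have Aty_top j : \sum_(i < n) y i * A i j = l * a ord0 * V j ord0.
  rewrite (svd_mulr A_svd) (bigD1 ord0) //= [X in _ + X]big1 ?addr0 // => k k0.
  by rewrite -/(a k) a_eq0 ?mulr0 ?mul0r.
split=> //.
rewrite norm_Aty (bigD1 ord0) //= big1 ?addr0 in top_le; last first.
  by move=> k k0; rewrite a_eq0 // mulr0 expr0n.
by rewrite -(ler_pM2l (exprn_gt0 2 (lam_gt0 ord0))) mulr1 -exprMn.
Qed.

End TopSingularValue.

Section MonotoneRows.
Variables (R : realDomainType) (n p : nat) (A : 'M[R]_(n, p)).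

Definition row_nondecrb i :=
  [forall j1 : 'I_p, forall j2 : 'I_p, (j1 <= j2)%N ==> (A i j1 <= A i j2)].

Lemma row_nondecrP i : reflect (row_nondecr A i) (row_nondecrb i).
Proof.
apply: (iffP forallP) => [A_nd j1 j2 j12 | A_nd j1].
  by have /forallP/(_ j2)/implyP := A_nd j1; apply.
by apply/forallP => j2; apply/implyP; apply: A_nd.
Qed.

End MonotoneRows.

Section Proposition1.
Variables (R : realFieldType) (n p r' : nat) (Theta : 'M[R]_(n, p)).
Variables (lam : 'I_r'.+1 -> R) (U : 'M[R]_(n, r'.+1)) (V : 'M[R]_(p, r'.+1)).
Hypothesis Theta_mono : forall i, row_nondecr Theta i \/ row_nonincr Theta i.
Hypotheses (UtU : U^T *m U = 1%:M) (VtV : V^T *m V = 1%:M).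
Hypothesis C_svd :
  center Theta = \sum_(k < r'.+1) lam k *: (col k U *m (col k V)^T).
Hypotheses (lam_gt0 : forall k, 0 < lam k)
  (lam_top : forall k, k != ord0 -> lam k < lam ord0).

Local Notation C := (center Theta).

Let sign i : R := if row_nondecrb Theta i then 1 else -1.
Let flip i j := sign i * C i j.
Let uflip i := sign i * `|U i ord0|.
Let coord := \sum_(i < n) U i ord0 * uflip i.

Let sign_sqr i : sign i ^+ 2 = 1.
Proof. by rewrite /sign; case: ifP => _; rewrite ?sqrrN expr1n. Qed.

Let norm_sign i : `|sign i| = 1.
Proof. by rewrite /sign; case: ifP => _; rewrite ?normrN normr1. Qed.

Lemma flip_nondecr i (j1 j2 : 'I_p) : (j1 <= j2)%N -> flip i j1 <= flip i j2.
Proof.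
move=> j12; rewrite /flip /sign; case: (row_nondecrP Theta i) => [nd|not_nd].
  by rewrite !mul1r row_nondecr_center.
have [//|ni] := Theta_mono i.
by rewrite !mulN1r lerN2 row_nonincr_center.
Qed.

Lemma flip_sum0 i : \sum_(j < p) flip i j = 0.
Proof. by rewrite -mulr_sumr center_row_sum0 mulr0. Qed.

Lemma top_right_sv_sum0 : \sum_(j < p) V j ord0 = 0.
Proof.
apply: (right_sv_sum0 UtU C_svd) => [i|]; first exact: center_row_sum0.
exact: lt0r_neq0.
Qed.

Lemma uflip_sqr_sum : \sum_(i < n) uflip i ^+ 2 = 1.
Proof.
rewrite -(orthonormal_col_sqr_sum ord0 UtU); apply: eq_bigr => i _.
by rewrite exprMn sign_sqr mul1r real_normK ?num_real.
Qed.

Lemma uflip_mulC j :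
  \sum_(i < n) uflip i * C i j = \sum_(i < n) `|U i ord0| * flip i j.
Proof. by apply: eq_bigr => i _; rewrite /uflip /flip; ring. Qed.

(* The rows [flip i] are nondecreasing and sum to zero, so by Chebyshev their
   Gram matrix is nonnegative and replacing the coefficients of u_1 by their
   absolute values can only increase the norm. *)
Lemma top_sv_le_uflip :
  lam ord0 ^+ 2 <= \sum_(j < p) (\sum_(i < n) uflip i * C i j) ^+ 2.
Proof.
have -> : lam ord0 ^+ 2 =
    \sum_(j < p) (\sum_(i < n) (U i ord0 * sign i) * flip i j) ^+ 2.
  rewrite -[LHS]mulr1 -(orthonormal_col_sqr_sum ord0 VtV) mulr_sumr.
  apply: eq_bigr => j _; rewrite -exprMn -(svd_mul_left_sv UtU C_svd).
  congr (_ ^+ 2); apply: eq_bigr => i _.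
  by rewrite /flip -[in LHS](mulr1 (U i ord0)) -(sign_sqr i); ring.
apply: le_trans (sum_sqr_lincomb_le_norm _ _) _.
  by move=> i1 i2; apply: chebyshev_sum_ge0 (flip_sum0 i2); apply: flip_nondecr.
rewrite le_eqVlt; apply/orP; left; apply/eqP/eq_bigr => j _.
rewrite uflip_mulC; congr (_ ^+ 2); apply: eq_bigr => i _.
by rewrite normrM norm_sign mulr1.
Qed.

Lemma uflip_top : 1 <= coord ^+ 2 /\
  forall j, \sum_(i < n) uflip i * C i j = lam ord0 * coord * V j ord0.
Proof.
apply: (svd_top_attained UtU VtV C_svd lam_gt0 lam_top).
  by rewrite uflip_sqr_sum.
exact: top_sv_le_uflip.
Qed.

Lemma uflip_image_nondecr (j1 j2 : 'I_p) : (j1 <= j2)%N ->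
  \sum_(i < n) uflip i * C i j1 <= \sum_(i < n) uflip i * C i j2.
Proof.
move=> j12; rewrite !uflip_mulC; apply: ler_sum => i _.
by rewrite ler_wpM2l ?normr_ge0 ?flip_nondecr.
Qed.

Lemma U_mul_uflip_le i : U i ord0 * uflip i <= U i ord0 ^+ 2.
Proof.
apply: le_trans (ler_norm _) _.
by rewrite normrM normrM norm_sign mul1r normr_id -normrM -expr2 ger0_norm ?sqr_ge0.
Qed.

Variable k0 : 'I_p.
Hypotheses (V_lt_k0 : forall j : 'I_p, (j < k0)%N -> V j ord0 = 0)
  (V_k0_lt0 : V k0 ord0 < 0).

Lemma coord_gt0 : 0 < coord.
Proof.
have [coord_ge1 image_eq] := uflip_top.
case: (ltrP 0 coord) => // coord_le0.
have coord_lt0 : coord < 0.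
  rewrite lt_neqAle coord_le0 andbT; apply: contraTneq coord_ge1 => ->.
  by rewrite expr0n /= ler10.
have V_ni (j1 j2 : 'I_p) : (j1 <= j2)%N -> V j2 ord0 <= V j1 ord0.
  move=> j12; have := uflip_image_nondecr j12; rewrite !image_eq.
  by rewrite ler_nM2l // pmulr_rlt0.
have := nonincr_sum_lt0 V_ni V_lt_k0 V_k0_lt0.
by rewrite top_right_sv_sum0 ltxx.
Qed.

Lemma coord_eq1 : coord = 1.
Proof.
have coord_le1 : coord <= 1.
  rewrite -(orthonormal_col_sqr_sum ord0 UtU).
  by apply: ler_sum => i _; rewrite U_mul_uflip_le.
have [coord_ge1 _] := uflip_top.
apply/le_anti; rewrite coord_le1 /=; apply: le_trans coord_ge1 _.
by rewrite expr2 ler_piMr // ltW // coord_gt0.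
Qed.

Lemma U_mul_uflip i : U i ord0 * uflip i = U i ord0 ^+ 2.
Proof.
have gap_ge0 i' : 0 <= U i' ord0 ^+ 2 - U i' ord0 * uflip i'.
  by rewrite subr_ge0 U_mul_uflip_le.
have gap_sum0 : \sum_(i' < n) (U i' ord0 ^+ 2 - U i' ord0 * uflip i') = 0.
  by rewrite sumrB -/coord coord_eq1 orthonormal_col_sqr_sum // subrr.
have /eqP := psumr_eq0P (fun i' _ => gap_ge0 i') gap_sum0 (i := i) isT.
by rewrite subr_eq0 => /eqP.
Qed.

Lemma top_right_sv_nondecr (j1 j2 : 'I_p) : (j1 <= j2)%N ->
  V j1 ord0 <= V j2 ord0.
Proof.
have [_ image_eq] := uflip_top.
move=> j12; have := uflip_image_nondecr j12.
by rewrite !image_eq coord_eq1 mulr1 ler_pM2l.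
Qed.

Lemma top_left_sv_ge0 i : row_nondecr Theta i -> 0 <= U i ord0.
Proof.
move=> /row_nondecrP nd; apply: mulr_norm_sqr_ge0.
by rewrite -U_mul_uflip /uflip /sign nd mul1r.
Qed.

Lemma top_left_sv_le0 i : row_nonincr Theta i -> U i ord0 <= 0.
Proof.
move=> ni; have [/row_nondecrP nd|not_nd] := boolP (row_nondecrb Theta i).
  have /eqP : lam ord0 * U i ord0 = 0.
    rewrite -(svd_mul_right_sv VtV C_svd) big1 // => j _.
    by rewrite center_const_row ?mul0r.
  by rewrite mulf_eq0 (gt_eqF (lam_gt0 _)) /= => /eqP ->.
rewrite -oppr_ge0; apply: mulr_norm_sqr_ge0.
by rewrite normrN sqrrN -U_mul_uflip /uflip /sign (negbTE not_nd) mulN1r mulrN mulNr.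
Qed.

End Proposition1.

Theorem proposition1 (R : rcfType) (n p r' : nat) (Theta : 'M[R]_(n, p))
  (lam : 'I_r'.+1 -> R) (U : 'M[R]_(n, r'.+1)) (V : 'M[R]_(p, r'.+1)) :
  (forall i : 'I_n, row_nondecr Theta i \/ row_nonincr Theta i) ->
  is_svd (center Theta) lam U V ->
  condA lam V ->
  [/\ \sum_(j < p) V j ord0 = 0,
      (forall j1 j2 : 'I_p, (j1 <= j2)%N -> V j1 ord0 <= V j2 ord0),
      (forall i : 'I_n, row_nondecr Theta i -> 0 <= U i ord0)
    & (forall i : 'I_n, row_nonincr Theta i -> U i ord0 <= 0)].
Proof.
move=> mono [UtU VtV _ lam_gt0 C_svd] [lam_top [k0 [V_lt_k0 V_k0_lt0]]].
split=> [|j1 j2 j12|i nd|i ni].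
- exact: top_right_sv_sum0 UtU C_svd lam_gt0.
- exact (top_right_sv_nondecr mono UtU VtV C_svd lam_gt0 lam_top V_lt_k0 V_k0_lt0 j12).
- exact (top_left_sv_ge0 mono UtU VtV C_svd lam_gt0 lam_top V_lt_k0 V_k0_lt0 nd).
- exact (top_left_sv_le0 mono UtU VtV C_svd lam_gt0 lam_top V_lt_k0 V_k0_lt0 ni).
Qed.
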